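(* Let $0<r<1$ and let $J$ be an invertible operator on a Hilbert space $\mathcal H$. Then $J\in\mathcal C_{1,r}$ if and only if $(1+r^2)I_{\mathcal H}-J^*J-r^2J^{-1}J^{-*}=0$. Moreover, $J\in\mathcal C_{1,r}$ if and only if $r^{-1/2}J\in\mathcal QA_{\sqrt r}$.
   Context: For $0<s<1$, $\mathcal C_{1,s}$ is the class of operators $J$ on a Hilbert space $\mathcal H$ for which there exist orthogonal projections $P_0,P_1$ on $\mathcal H$ with $P_0+P_1=I_{\mathcal H}$ and $J^*J=P_0+s^2P_1$; $\mathcal QA_s$ is the class of operators $S$ on $\mathcal H$ for which there exist orthogonal projections $P_0,P_1$ with $P_0+P_1=I_{\mathcal H}$ and $S^*S=s^2P_0+s^{-2}P_1$. $J^{-*}=(J^{-1})^*$. *)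

From HB Require Import structures.
From mathcomp Require Import all_boot all_order all_algebra.
From mathcomp Require Import reals.
From mathcomp Require Import complex.
Set Implicit Arguments. Unset Strict Implicit. Unset Printing Implicit Defensive.
Import Order.TTheory GRing.Theory Num.Theory.
Local Open Scope ring_scope.
Local Open Scope complex_scope.

Section Hilbert.
Variable R : realType.
Variable V : lmodType R[i].
Variable ip : V -> V -> R[i].

Definition normsq (x : V) : R[i] := ip x x.

Definition is_inner_product : Prop :=
  [/\ (forall (a : R[i]) (x y z : V), ip (a *: x + y) z = a * ip x z + ip y z),
      (forall x y : V, ip y x = Num.conj (ip x y)),
      (forall x : V, 0 <= ip x x) &
      (forall x : V, ip x x = 0 -> x = 0)].

Definition norm_cauchy (u : nat -> V) : Prop :=
  forall e : R, 0 < e -> exists N : nat, forall m n : nat,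
    (N <= m)%N -> (N <= n)%N -> normsq (u m - u n) < e%:C.

Definition norm_converges_to (u : nat -> V) (l : V) : Prop :=
  forall e : R, 0 < e -> exists N : nat, forall n : nat,
    (N <= n)%N -> normsq (u n - l) < e%:C.

Definition is_hilbert_space : Prop :=
  is_inner_product /\
  (forall u : nat -> V, norm_cauchy u -> exists l : V, norm_converges_to u l).

Definition is_operator (T : V -> V) : Prop :=
  (forall (a : R[i]) (x y : V), T (a *: x + y) = a *: T x + T y) /\
  (exists M : R, forall x : V, normsq (T x) <= M%:C * normsq x).

Definition is_adjoint (T Tstar : V -> V) : Prop :=
  forall x y : V, ip (T x) y = ip x (Tstar y).

Definition is_orth_proj (P : V -> V) : Prop :=
  [/\ is_operator P, (forall x, P (P x) = P x) & is_adjoint P P].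

Definition class_C1 (s : R) (J : V -> V) : Prop :=
  is_operator J /\
  exists Jstar : V -> V, is_adjoint J Jstar /\
  exists P0 P1 : V -> V,
    [/\ is_orth_proj P0, is_orth_proj P1,
        (forall x, P0 x + P1 x = x) &
        (forall x, Jstar (J x) = P0 x + (s ^+ 2)%:C *: P1 x)].

Definition class_QA (s : R) (S : V -> V) : Prop :=
  is_operator S /\
  exists Sstar : V -> V, is_adjoint S Sstar /\
  exists P0 P1 : V -> V,
    [/\ is_orth_proj P0, is_orth_proj P1,
        (forall x, P0 x + P1 x = x) &
        (forall x, Sstar (S x) = (s ^+ 2)%:C *: P0 x + (s ^- 2)%:C *: P1 x)].

End Hilbert.

From HB Require Import structures.
From mathcomp Require Import all_boot all_order all_algebra.
From mathcomp Require Import reals.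
From mathcomp Require Import complex.
From mathcomp Require Import ring.
Import Order.TTheory GRing.Theory Num.Theory.
Local Open Scope ring_scope.
Local Open Scope complex_scope.
Set Implicit Arguments. Unset Strict Implicit. Unset Printing Implicit Defensive.

(* Put A = J^*J.  For a self-adjoint A and
   reals a <> b, the decompositions A = a P0 + b P1 are exactly the solutions
   of (A - a)(A - b) = 0, the projections being recovered by Lagrange
   interpolation, P0 = (A - b)/(a - b) and P1 = (A - a)/(b - a).  Multiplying
   (A - 1)(A - r^2) = 0 by A^-1 = J^-1 J^-* gives the first equivalence.  For
   S = r^{-1/2} J we have S^*S = r^-1 A, and r^-1 (P0 + r^2 P1) = r^-1 P0 + r P1
   is the QA_{sqrt r} shape with the roles of P0 and P1 exchanged. *)

Section LinearFun.
Variables (K : pzRingType) (V : lmodType K).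
Implicit Types T U P Q : V -> V.

Lemma linear_funD T : linear T -> {morph T : x y / x + y}.
Proof. by case/GRing.semilinear_linear. Qed.

Lemma linear_funB T : linear T -> {morph T : x y / x - y}.
Proof. exact: zmod_morphism_linear. Qed.

Lemma linear_funZ T : linear T -> scalable T.
Proof. exact: scalable_linear. Qed.

Lemma linear_comp T U : linear T -> linear U -> linear (fun x => T (U x)).
Proof. by move=> hT hU a x y; rewrite hU hT. Qed.

Lemma proj_compl0 P Q : linear P -> (forall x, P (P x) = P x) ->
  (forall x, P x + Q x = x) -> forall x, P (Q x) = 0.
Proof.
move=> linP idP PQ x; have := congr1 P (PQ x).
by rewrite linear_funD // idP -{2}[P x]addr0 => /addrI.
Qed.

Lemma quadratic_iff_inverse (u v : K) (A Ainv : V -> V) :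
  cancel Ainv A -> cancel A Ainv ->
  (forall x, A (A x) = u *: A x - v *: x) <-> (forall x, u *: x - A x - v *: Ainv x = 0).
Proof.
move=> AinvK AK; split=> hA x.
  by have := hA (Ainv x); rewrite AinvK => ->; rewrite opprB subrKC subrr.
by have /eqP := hA (A x); rewrite AK subr_eq0 => /eqP <-; rewrite opprB subrKC.
Qed.

End LinearFun.

Lemma linear_scale_shift (K : comPzRingType) (V : lmodType K) (T : V -> V) (c d : K) :
  linear T -> linear (fun x => c *: (T x - d *: x)).
Proof.
move=> hT a x y; rewrite hT [d *: _]scalerDr opprD addrACA scalerA mulrC -scalerA.
by rewrite -scalerBr scalerDr !scalerA mulrC.
Qed.

Section Combination2.
Variables (K : pzRingType) (V : lmodType K).

Definition comb2 (p q : V) (a b : K) := a *: p + b *: q.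

Lemma comb2D p q a b c d : comb2 p q a b + comb2 p q c d = comb2 p q (a + c) (b + d).
Proof. by rewrite /comb2 !scalerDl addrACA. Qed.

Lemma comb2N p q a b : - comb2 p q a b = comb2 p q (- a) (- b).
Proof. by rewrite /comb2 opprD !scaleNr. Qed.

Lemma comb2Z p q k a b : k *: comb2 p q a b = comb2 p q (k * a) (k * b).
Proof. by rewrite /comb2 scalerDr !scalerA. Qed.

Lemma comb2_congr p q a b c d : a = c -> b = d -> comb2 p q a b = comb2 p q c d.
Proof. by move=> -> ->. Qed.

Lemma comb2_fst p q : p = comb2 p q 1 0.
Proof. by rewrite /comb2 scale1r scale0r addr0. Qed.

Lemma comb2_snd p q : q = comb2 p q 0 1.
Proof. by rewrite /comb2 scale1r scale0r add0r. Qed.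

End Combination2.

(* Reduces an identity between linear combinations of the vectors [p] and [q]
   to the equality of their coefficients.  [f] is a local definition so that
   rewriting [q] does not reach the [q] hidden in [f 1 0]. *)
Ltac comb2_coeffs p q :=
  let f := fresh "f" in
  let fD := fresh "fD" in let fN := fresh "fN" in let fZ := fresh "fZ" in
  pose f := comb2 p q;
  have fD : forall a b c d, f a b + f c d = f (a + c) (b + d) := comb2D p q;
  have fN : forall a b, - f a b = f (- a) (- b) := comb2N p q;
  have fZ : forall k a b, k *: f a b = f (k * a) (k * b) := comb2Z p q;
  rewrite [p](comb2_fst p q : p = f 1 0) [q](comb2_snd p q : q = f 0 1);
  rewrite !(fD, fN, fZ); apply: comb2_congr; clear fD fN fZ.

Section InnerProductSpace.
Variables (R : realType) (V : lmodType R[i]) (ip : V -> V -> R[i]).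
Hypothesis ip_inner : is_inner_product ip.
Implicit Types (x y z : V) (T U A P : V -> V).

Lemma conj_realC (c : R) : Num.conj c%:C = c%:C.
Proof. exact: conjc_real. Qed.

Lemma ipDl x y z : ip (x + y) z = ip x z + ip y z.
Proof. by case: ip_inner => ipl _ _ _; have := ipl 1 x y z; rewrite scale1r mul1r. Qed.

Lemma ip0l z : ip 0 z = 0.
Proof. by apply: (addrI (ip 0 z)); rewrite -ipDl !addr0. Qed.

Lemma ipZl a x z : ip (a *: x) z = a * ip x z.
Proof. by case: ip_inner => ipl _ _ _; rewrite -[a *: x]addr0 ipl ip0l addr0. Qed.

Lemma ipBl x y z : ip (x - y) z = ip x z - ip y z.
Proof. by rewrite ipDl -scaleN1r ipZl mulN1r. Qed.

Lemma ip_conj x y : ip y x = Num.conj (ip x y).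
Proof. by case: ip_inner. Qed.

Lemma ipDr x y z : ip x (y + z) = ip x y + ip x z.
Proof. by rewrite [LHS]ip_conj [ip x y]ip_conj [ip x z]ip_conj ipDl rmorphD. Qed.

Lemma ipZr a x y : ip x (a *: y) = Num.conj a * ip x y.
Proof. by rewrite [LHS]ip_conj [ip x y]ip_conj ipZl rmorphM. Qed.

Lemma ipBr x y z : ip x (y - z) = ip x y - ip x z.
Proof. by rewrite [LHS]ip_conj [ip x y]ip_conj [ip x z]ip_conj ipBl rmorphB. Qed.

Lemma ip0r x : ip x 0 = 0.
Proof. by rewrite ip_conj ip0l rmorph0. Qed.

Lemma eq_ip_r u v : (forall x, ip x u = ip x v) -> u = v.
Proof.
case: ip_inner => _ _ _ ip_def huv; apply/eqP; rewrite -subr_eq0; apply/eqP.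
by apply: ip_def; rewrite ipBr huv subrr.
Qed.

Lemma normsqZ (c : R) x : normsq ip (c%:C *: x) = (c ^+ 2)%:C * normsq ip x.
Proof. by rewrite /normsq ipZl ipZr conj_realC mulrA -rmorphM -expr2. Qed.

Lemma adjoint_linear T Ts : is_adjoint ip T Ts -> linear Ts.
Proof. by move=> hT a y z; apply: eq_ip_r => x; rewrite ipDr ipZr -!hT ipDr ipZr. Qed.

Lemma adjoint_unique T S1 S2 : is_adjoint ip T S1 -> is_adjoint ip T S2 -> S1 =1 S2.
Proof. by move=> h1 h2 y; apply: eq_ip_r => x; rewrite -h1 -h2. Qed.

Lemma adjoint_sym T Ts : is_adjoint ip T Ts -> is_adjoint ip Ts T.
Proof. by move=> hT x y; rewrite ip_conj -hT -ip_conj. Qed.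

Lemma adjoint_comp T Ts U Us : is_adjoint ip T Ts -> is_adjoint ip U Us ->
  is_adjoint ip (fun x => T (U x)) (fun y => Us (Ts y)).
Proof. by move=> hT hU x y; rewrite hT hU. Qed.

Lemma adjoint_cancel T Ts U Us : is_adjoint ip T Ts -> is_adjoint ip U Us ->
  cancel U T -> cancel Ts Us.
Proof. by move=> hT hU UK z; apply: eq_ip_r => x; rewrite -hU -hT UK. Qed.

Lemma adjointZ (c : R) T Ts : is_adjoint ip T Ts ->
  is_adjoint ip (fun x => c%:C *: T x) (fun y => c%:C *: Ts y).
Proof. by move=> hT x y; rewrite ipZl ipZr conj_realC hT. Qed.

Lemma is_operatorZ (c : R) T : is_operator ip T -> is_operator ip (fun x => c%:C *: T x).
Proof.
case=> linT [M hM]; split.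
  by move=> a x y; rewrite linT scalerDr !scalerA mulrC.
exists (c ^+ 2 * M) => x; rewrite normsqZ [(c ^+ 2 * M)%:C]rmorphM -mulrA.
by apply: ler_wpM2l; [rewrite ler0c sqr_ge0 | exact: hM].
Qed.

Lemma normsq_proj_le P : linear P -> (forall x, P (P x) = P x) -> is_adjoint ip P P ->
  forall x, normsq ip (P x) <= normsq ip x.
Proof.
move=> linP idP adjP x; pose Q y := y - P y.
have PQ y : P y + Q y = y by rewrite subrKC.
have PQ0 : ip (P x) (Q x) = 0 by rewrite adjP (proj_compl0 linP idP PQ) ip0r.
rewrite /normsq -{3 4}(PQ x) ipDl (ipDr (P x) (P x)) (ipDr (Q x) (P x)).
rewrite PQ0 [ip (Q x) (P x)]ip_conj PQ0 rmorph0 addr0 add0r lerDl.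
by case: ip_inner => _ _ + _; apply.
Qed.

Lemma orth_proj_of_idem P : linear P -> (forall x, P (P x) = P x) -> is_adjoint ip P P ->
  is_orth_proj ip P.
Proof.
move=> linP idP adjP; split=> //; split=> //.
by exists 1 => x; rewrite mul1r normsq_proj_le.
Qed.

Definition proj_decomposition (a b : R) A := exists P0 P1,
  [/\ is_orth_proj ip P0, is_orth_proj ip P1, (forall x, P0 x + P1 x = x) &
      forall x, A x = a%:C *: P0 x + b%:C *: P1 x].

Lemma proj_decompositionC a b A : proj_decomposition a b A <-> proj_decomposition b a A.
Proof.
suff swap a' b' : proj_decomposition a' b' A -> proj_decomposition b' a' A.
  by split; apply: swap.
by case=> P0 [P1 [o0 o1 sum01 hA]]; exists P1, P0; split=> // x; rewrite addrC.
Qed.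

Lemma proj_decompositionZ (c a b : R) A B : c != 0 -> (forall x, B x = c%:C *: A x) ->
  proj_decomposition (c * a) (c * b) B <-> proj_decomposition a b A.
Proof.
move=> c0 hB; split=> -[P0 [P1 [o0 o1 sum01 hP]]]; exists P0, P1; split=> // x.
  have -> : A x = (c^-1)%:C *: B x by rewrite hB scalerA -rmorphM mulVf ?scale1r.
  rewrite hP; move: (P0 x) (P1 x) => p q.
  by comb2_coeffs p q; field; rewrite fmorph_eq0.
by rewrite hB hP; move: (P0 x) (P1 x) => p q; comb2_coeffs p q; rewrite !rmorphM; ring.
Qed.

Definition quadratic_relation (a b : R) A :=
  forall x, A (A x) = (a + b)%:C *: A x - (a * b)%:C *: x.

Lemma proj_decomposition_quadratic a b A :
  proj_decomposition a b A -> quadratic_relation a b A.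
Proof.
case=> P0 [P1 [[[lin0 _] id0 _] [[lin1 _] id1 _] sum01 hA] x].
have sum10 y : P1 y + P0 y = y by rewrite addrC.
have P0A : P0 (A x) = a%:C *: P0 x.
  rewrite hA (linear_funD lin0) !(linear_funZ lin0) id0.
  by rewrite (proj_compl0 lin0 id0 sum01) scaler0 addr0.
have P1A : P1 (A x) = b%:C *: P1 x.
  rewrite hA (linear_funD lin1) !(linear_funZ lin1) id1.
  by rewrite (proj_compl0 lin1 id1 sum10) scaler0 add0r.
rewrite [A (A x)]hA P0A P1A hA; move: (P0 x) (P1 x) (sum01 x) => p q <-.
by comb2_coeffs p q; rewrite !rmorphD !rmorphM; ring.
Qed.

(* The projection onto ker (A - a) along ker (A - b), by Lagrange interpolation. *)
Definition spectral_proj (a b : R) A x := ((a - b)^-1)%:C *: (A x - b%:C *: x).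

Lemma spectral_proj_orth a b A : a != b -> linear A -> is_adjoint ip A A ->
  quadratic_relation a b A -> is_orth_proj ip (spectral_proj a b A).
Proof.
move=> ab linA adjA quadA; apply: orth_proj_of_idem.
- exact: linear_scale_shift.
- move=> x; rewrite /spectral_proj (linear_funZ linA) (linear_funB linA).
  rewrite (linear_funZ linA) quadA; move: (A x) => p.
  by comb2_coeffs p x; field; rewrite -rmorphB fmorph_eq0 subr_eq0.
- by move=> x y; rewrite ipZl ipZr ipBl ipBr ipZl ipZr !conj_realC adjA.
Qed.

Lemma quadratic_proj_decomposition a b A : a != b -> linear A -> is_adjoint ip A A ->
  quadratic_relation a b A -> proj_decomposition a b A.
Proof.
move=> ab linA adjA quadA; have ba : b != a by rewrite eq_sym.
have quadA' : quadratic_relation b a A by move=> x; rewrite [b + a]addrC [b * a]mulrC.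
exists (spectral_proj a b A), (spectral_proj b a A); split.
- exact: spectral_proj_orth.
- exact: spectral_proj_orth.
- move=> x; rewrite /spectral_proj; move: (A x) => p.
  by comb2_coeffs p x; field; rewrite -!rmorphB !fmorph_eq0 !subr_eq0 ab ba.
- move=> x; rewrite /spectral_proj; move: (A x) => p.
  by comb2_coeffs p x; field; rewrite -!rmorphB !fmorph_eq0 !subr_eq0 ab ba.
Qed.

Lemma class_C1E s J Jstar : is_adjoint ip J Jstar ->
  class_C1 ip s J <->
  is_operator ip J /\ proj_decomposition 1 (s ^+ 2) (fun x => Jstar (J x)).
Proof.
move=> adjJ; split.
  case=> opJ [Js [adjJs [P0 [P1 [o0 o1 sum01 hJ]]]]]; split=> //.
  by exists P0, P1; split=> // x; rewrite rmorph1 scale1r (adjoint_unique adjJ adjJs) hJ.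
case=> opJ [P0 [P1 [o0 o1 sum01 hJ]]]; split=> //; exists Jstar; split=> //.
by exists P0, P1; split=> // x; rewrite hJ rmorph1 scale1r.
Qed.

Lemma class_QAE s S Sstar : is_adjoint ip S Sstar ->
  class_QA ip s S <->
  is_operator ip S /\ proj_decomposition (s ^+ 2) (s ^- 2) (fun x => Sstar (S x)).
Proof.
move=> adjS; split.
  case=> opS [Ss [adjSs [P0 [P1 [o0 o1 sum01 hS]]]]]; split=> //.
  by exists P0, P1; split=> // x; rewrite (adjoint_unique adjS adjSs) hS.
case=> opS [P0 [P1 [o0 o1 sum01 hS]]]; split=> //; exists Sstar; split=> //.
by exists P0, P1.
Qed.

Lemma class_C1_quadratic s J Jstar : s ^+ 2 != 1 -> is_operator ip J ->
  is_adjoint ip J Jstar ->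
  class_C1 ip s J <-> quadratic_relation 1 (s ^+ 2) (fun x => Jstar (J x)).
Proof.
move=> s2 opJ adjJ; apply: (iff_trans (class_C1E s adjJ)).
split=> [[_ /proj_decomposition_quadratic //] | quadA].
split=> //; apply: quadratic_proj_decomposition; rewrite 1?eq_sym //.
- exact: linear_comp (adjoint_linear adjJ) opJ.1.
- exact: adjoint_comp (adjoint_sym adjJ) adjJ.
Qed.

Lemma class_C1_QA r J Jstar : 0 < r -> is_operator ip J -> is_adjoint ip J Jstar ->
  class_C1 ip r J <-> class_QA ip (Num.sqrt r) (fun x => (Num.sqrt r)^-1%:C *: J x).
Proof.
move=> r_gt0 opJ adjJ; set s := Num.sqrt r.
have s2 : s ^+ 2 = r by rewrite sqr_sqrtr // ltW.
have r0 : r != 0 by rewrite gt_eqF.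
have SstarS x : s^-1%:C *: Jstar (s^-1%:C *: J x) = (r^-1)%:C *: Jstar (J x).
  by rewrite (linear_funZ (adjoint_linear adjJ)) scalerA -rmorphM -invfM -expr2 s2.
have := proj_decompositionZ 1 (r ^+ 2) (invr_neq0 r0) SstarS.
have -> : r^-1 * r ^+ 2 = r by rewrite expr2 mulKf.
rewrite mulr1 => scaled.
apply: (iff_trans (class_C1E r adjJ)); apply: iff_sym.
apply: (iff_trans (class_QAE s (adjointZ s^-1 adjJ))); rewrite s2.
split=> -[_ pdA]; split=> //.
- by apply/scaled/proj_decompositionC.
- exact: is_operatorZ.
- by apply/proj_decompositionC/scaled.
Qed.

End InnerProductSpace.

Theorem proposition2p3 (R : realType) (V : lmodType R[i]) (ip : V -> V -> R[i])
  (hH : is_hilbert_space ip) (r : R) (hr0 : 0 < r) (hr1 : r < 1)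
  (J Jstar Jinv Jinvstar : V -> V)
  (hJ : is_operator ip J) (hJstar : is_adjoint ip J Jstar)
  (hJinv : is_operator ip Jinv)
  (hJJinv : forall x, J (Jinv x) = x) (hJinvJ : forall x, Jinv (J x) = x)
  (hJinvstar : is_adjoint ip Jinv Jinvstar) :
  (class_C1 ip r J <->
     (forall x : V, (1 + r ^+ 2)%:C *: x - Jstar (J x)
                     - (r ^+ 2)%:C *: Jinv (Jinvstar x) = 0)) /\
  (class_C1 ip r J <->
     class_QA ip (Num.sqrt r) (fun x => (Num.sqrt r)^-1%:C *: J x)).
Proof.
have ip_inner := hH.1.
split; last exact: class_C1_QA hr0 hJ hJstar.
have AinvK : cancel (fun x => Jinv (Jinvstar x)) (fun x => Jstar (J x)).
  by move=> x; rewrite hJJinv (adjoint_cancel ip_inner hJinvstar hJstar hJinvJ).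
have AK : cancel (fun x => Jstar (J x)) (fun x => Jinv (Jinvstar x)).
  by move=> x; rewrite (adjoint_cancel ip_inner hJstar hJinvstar hJJinv).
have r2 : r ^+ 2 != 1 by rewrite lt_eqF // expr_lt1 // ltW.
apply: (iff_trans (class_C1_quadratic ip_inner r2 hJ hJstar)).
by rewrite /quadratic_relation mul1r; apply: quadratic_iff_inverse.
Qed.
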